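(* Let $\mathsf{K}$ be a quasivariety, $\mathbf{B}\in\mathsf{K}$, and $\mathbf{A}\leq\mathbf{B}$ full in $\mathsf{K}$. Then $\mathbf{A}\leq\mathbf{B}$ is not epic in $\mathsf{K}$ if and only if at least one of the following holds: (i) there are two distinct $\theta,\phi\in\mathrm{Con}_{\mathsf{K}}(\mathbf{B})$ with $\theta{\upharpoonright}_A=\phi{\upharpoonright}_A$; (ii) there are two distinct embeddings $g,h\colon\mathbf{B}\to\mathbf{C}$ with $\mathbf{C}\in\mathsf{K}_{\mathrm{RSI}}$ and $g{\upharpoonright}_A=h{\upharpoonright}_A$. Moreover, if (i) holds one may take $\theta=\mathrm{id}_B$.
   Context: A quasivariety is a class of similar algebras closed under isomorphic copies, subalgebras, direct products and ultraproducts. $\mathbf{A}\leq\mathbf{B}$ is epic in $\mathsf{K}$ if for all $\mathbf{C}\in\mathsf{K}$ and homomorphisms $g,h\colon\mathbf{B}\to\mathbf{C}$, $g{\upharpoonright}_A=h{\upharpoonright}_A$ implies $g=h$. $\mathrm{Con}_{\mathsf{K}}(\mathbf{B})$ is the set of congruences $\theta$ of $\mathbf{B}$ with $\mathbf{B}/\theta\in\mathsf{K}$; $\theta{\upharpoonright}_A=\theta\cap(A\times A)$. $\mathbf{A}\leq\mathbf{B}$ is full in $\mathsf{K}$ if it is proper, almost total ($B=\mathrm{Sg}^{\mathbf{B}}(A\cup\{b\})$ for some $b$), and for every $\theta\in\mathrm{Con}_{\mathsf{K}}(\mathbf{B})$ with $\theta\neq\mathrm{id}_B$ and every $b\in B$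 there is $a\in A$ with $\langle a,b\rangle\in\theta$. $\mathsf{K}_{\mathrm{RSI}}$ is the class of members $\mathbf{C}\in\mathsf{K}$ that are subdirectly irreducible relative to $\mathsf{K}$: for every subdirect embedding $f\colon\mathbf{C}\to\prod_{i\in I}\mathbf{B}_i$ with all $\mathbf{B}_i\in\mathsf{K}$ some $p_i\circ f$ is an isomorphism (trivial algebras are excluded). *)

From mathcomp Require Import ssreflect ssrfun ssrbool eqtype ssrnat fintype.
Set Implicit Arguments. Unset Strict Implicit. Unset Printing Implicit Defensive.

Record signature := Signature { op_sym : Type; arity : op_sym -> nat }.

Section UA.
Variable sig : signature.

Record algebra := Algebra {
  carrier :> Type;
  interp : forall o : op_sym sig, ('I_(arity o) -> carrier) -> carrier }.

Definition is_hom (A B : algebra) (f : A -> B) : Prop :=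
  forall (o : op_sym sig) (args : 'I_(arity o) -> A),
    f (interp args) = interp (fun k => f (args k)).

Definition surj (A B : Type) (f : A -> B) : Prop := forall y, exists x, f x = y.

Definition prod_alg (I : Type) (A : I -> algebra) : algebra :=
  @Algebra (forall i, A i) (fun o args i => interp (fun k => args k i)).

Definition proj (I : Type) (A : I -> algebra) (i : I) : prod_alg A -> A i :=
  fun x => x i.

Definition ultrafilter (I : Type) (U : (I -> Prop) -> Prop) : Prop :=
  [/\ U (fun _ => True), ~ U (fun _ => False),
      (forall X Y : I -> Prop, U X -> (forall i, X i -> Y i) -> U Y),
      (forall X Y : I -> Prop, U X -> U Y -> U (fun i => X i /\ Y i)) &
      (forall X : I -> Prop, U X \/ U (fun i => ~ X i))].

(* K is closed under isomorphic copies and subalgebras (I and S: every algebra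
   embeddable into a member of K is in K), direct products (P), and
   ultraproducts (Pu: every homomorphic image of a product whose kernel is the
   ultrafilter congruence, i.e. every isomorphic copy of an ultraproduct). *)
Definition quasivariety (K : algebra -> Prop) : Prop :=
  [/\ (forall (C D : algebra) (f : C -> D),
          is_hom f -> injective f -> K D -> K C),
      (forall (I : Type) (A : I -> algebra), (forall i, K (A i)) -> K (prod_alg A)) &
      (forall (I : Type) (A : I -> algebra) (U : (I -> Prop) -> Prop)
              (C : algebra) (f : prod_alg A -> C),
          ultrafilter U -> (forall i, K (A i)) -> is_hom f -> surj f ->
          (forall x y : prod_alg A, f x = f y <-> U (fun i => x i = y i)) ->
          K C)].

Definition subuniverse (B : algebra) (P : B -> Prop) : Prop :=
  forall (o : op_sym sig) (args : 'I_(arity o) -> B),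
    (forall k, P (args k)) -> P (interp args).

Definition Sg (B : algebra) (X : B -> Prop) : B -> Prop :=
  fun x => forall S : B -> Prop, subuniverse S -> (forall y, X y -> S y) -> S x.

Definition congruence (B : algebra) (th : B -> B -> Prop) : Prop :=
  [/\ (forall x, th x x), (forall x y, th x y -> th y x),
      (forall x y z, th x y -> th y z -> th x z) &
      (forall (o : op_sym sig) (a b : 'I_(arity o) -> B),
          (forall k, th (a k) (b k)) -> th (interp a) (interp b))].

(* theta \in Con_K(B): theta is a congruence and B/theta \in K, the quotient
   being represented (up to isomorphism) by a surjective homomorphism with
   kernel theta. *)
Definition ConK (K : algebra -> Prop) (B : algebra) (th : B -> B -> Prop) : Prop :=
  congruence th /\
  exists (C : algebra) (f : B -> C),
    [/\ K C, is_hom f, surj f & forall x y, f x = f y <-> th x y].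

Definition idrel (B : Type) : B -> B -> Prop := fun x y => x = y.

Definition restr_eq (B : Type) (A : B -> Prop) (th ph : B -> B -> Prop) : Prop :=
  forall a a', A a -> A a' -> (th a a' <-> ph a a').

Definition rel_distinct (B : Type) (th ph : B -> B -> Prop) : Prop :=
  exists x y, ~ (th x y <-> ph x y).

Definition epic (K : algebra -> Prop) (B : algebra) (A : B -> Prop) : Prop :=
  forall (C : algebra) (g h : B -> C), K C -> is_hom g -> is_hom h ->
    (forall a, A a -> g a = h a) -> forall x, g x = h x.

Definition full (K : algebra -> Prop) (B : algebra) (A : B -> Prop) : Prop :=
  [/\ (exists b, ~ A b),
      (exists b, forall x, Sg (fun y => A y \/ y = b) x) &
      (forall th, ConK K th -> rel_distinct th (@idrel B) ->
         forall b, exists a, A a /\ th a b)].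

Definition nontrivial (C : Type) : Prop := exists x y : C, x <> y.

Definition RSI (K : algebra -> Prop) (C : algebra) : Prop :=
  [/\ K C, nontrivial C &
      forall (I : Type) (D : I -> algebra) (f : C -> prod_alg D),
        (forall i, K (D i)) -> is_hom f -> injective f ->
        (forall i, surj (fun x => proj i (f x))) ->
        exists i, injective (fun x => proj i (f x))].
End UA.

(* Outside its identity, a relative congruence of a full extension is
   determined by its restriction to A, because each of its classes meets A.
   Hence two relative congruences with the same restriction have the identity
   as meet, and one of them is a nontrivial congruence restricting to the
   identity on A; such a congruence makes "the element of A in the class of b"
   a retraction of B onto A, which is incompatible with epicity.  Conversely,
   if g, h : B -> C in K differ at x, divide C by a relative congruence that is
   maximal among those not identifying g x and h x (Zorn's lemma; relative
   congruences are closed under unions of chains because these are kernels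
   into ultraproducts).  The quotient is relatively subdirectly irreducible,
   and the kernels of the two composites either differ, giving (i), or agree
   and are then trivial by fullness, giving (ii). *)

From mathcomp Require Import ssreflect ssrfun ssrbool eqtype ssrnat fintype.
From mathcomp Require classical_sets filter boolp.
From Stdlib Require Import ClassicalEpsilon Classical.
From Stdlib Require Import FunctionalExtensionality PropExtensionality ProofIrrelevance.

Set Implicit Arguments. Unset Strict Implicit. Unset Printing Implicit Defensive.

Lemma rel_ext (T : Type) (r s : T -> T -> Prop) :
  (forall x y, r x y <-> s x y) -> r = s.
Proof.
move=> rs; apply: functional_extensionality => x.
apply: functional_extensionality => y; exact: propositional_extensionality.
Qed.

Lemma rel_distinctP (T : Type) (r s : T -> T -> Prop) : rel_distinct r s <-> r <> s.
Proof.
split=> [[x [y rs]] rE | rs]; first by apply: rs; rewrite rE.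
apply: NNPP => nd; apply: rs; apply: rel_ext => x y.
by apply: NNPP => rs; apply: nd; exists x, y.
Qed.

Definition kernel (X Y : Type) (f : X -> Y) : X -> X -> Prop := fun x y => f x = f y.

Lemma ultrafilter_extension (I : Type) (F : (I -> Prop) -> Prop) :
  F (fun _ => True) -> ~ F (fun _ => False) ->
  (forall X Y, F X -> (forall i, X i -> Y i) -> F Y) ->
  (forall X Y, F X -> F Y -> F (fun i => X i /\ Y i)) ->
  exists2 U, ultrafilter U & forall X, F X -> U X.
Proof.
move=> FT FF FS FI.
have PF : filter.ProperFilter F.
  split; first exact: FF.
  split=> [//|X Y|X Y XY FX]; [exact: FI | exact: FS FX XY].
have [G [UG FG]] := filter.ultraFilterLemma PF.
have GF : filter.Filter G by apply: filter.filter_filter.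
exists G => //; split.
- exact: (@filter.filterT _ _ GF).
- exact: (@filter.filter_not_empty _ _ (@filter.ultra_proper _ _ UG)).
- by move=> X Y GX XY; exact: (@filter.filterS _ _ GF X Y XY GX).
- by move=> X Y; exact: (@filter.filterI _ _ GF X Y).
- by move=> X; exact: (@filter.in_ultra_setVsetC _ G X UG).
Qed.

Lemma ultrafilter_bigI (I : Type) (U : (I -> Prop) -> Prop) n (P : 'I_n -> I -> Prop) :
  ultrafilter U -> (forall k, U (P k)) -> U (fun i => forall k, P k i).
Proof.
case=> UT _ US UI _ UP.
suff /(_ n (leqnn n)) Un : forall m, m <= n -> U (fun i => forall k : 'I_n, k < m -> P k i).
  by apply: (US _ _ Un) => i Pi k; exact: Pi.
elim=> [|m IH] lemn; first by apply: (US _ _ UT) => i _ k; rewrite ltn0.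
apply: (US _ _ (UI _ _ (IH (ltnW lemn)) (UP (Ordinal lemn)))) => i [Pi Pm] k.
rewrite ltnS leq_eqVlt => /orP[/eqP km|]; last exact: Pi.
by have -> : k = Ordinal lemn by apply: val_inj.
Qed.

Section Quotients.
Variable sig : signature.

Lemma is_hom_comp (X Y Z : algebra sig) (f : X -> Y) (g : Y -> Z) :
  is_hom f -> is_hom g -> is_hom (g \o f).
Proof. by move=> hf hg o args /=; rewrite hf hg. Qed.

Lemma congruence_quotient (X : algebra sig) (th : X -> X -> Prop) : congruence th ->
  exists (Q : algebra sig) (f : X -> Q),
    [/\ is_hom f, surj f & forall x y, f x = f y <-> th x y].
Proof.
case=> thR thS thT thC.
pose T := {S : X -> Prop | exists x, S = th x}.
pose cls (x : X) : T := exist _ (th x) (ex_intro _ x erefl).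
pose rep (S : T) : X := sval (constructive_indefinite_description _ (svalP S)).
have repP S : sval S = th (rep S).
  by rewrite /rep; case: constructive_indefinite_description.
have clsE x y : cls x = cls y <-> th x y.
  split=> [/(f_equal sval) /= ->|thxy]; first exact: thR.
  apply: eq_sig_hprop => [? ? ?|/=]; first exact: proof_irrelevance.
  apply: functional_extensionality => z; apply: propositional_extensionality.
  by split=> [xz|yz]; [exact: thT (thS _ _ thxy) xz | exact: thT thxy yz].
have clsK S : cls (rep S) = S.
  apply: eq_sig_hprop => [? ? ?|/=]; first exact: proof_irrelevance.
  by rewrite -repP.
exists (@Algebra sig T (fun o args => cls (interp (fun k => rep (args k))))), cls.
split=> [o args /=|S|//]; last by exists (rep S).
by apply/clsE; apply: thC => k; apply/clsE; rewrite clsK.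
Qed.

End Quotients.

Section RelativeCongruences.
Variables (sig : signature) (K : algebra sig -> Prop).
Hypothesis QV : quasivariety K.

Lemma K_embedding (C D : algebra sig) (f : C -> D) :
  is_hom f -> injective f -> K D -> K C.
Proof. by case: QV => KS _ _; exact: KS. Qed.

Lemma K_prod (I : Type) (D : I -> algebra sig) : (forall i, K (D i)) -> K (prod_alg D).
Proof. by case: QV => _ KP _; exact: KP. Qed.

Lemma ConK_ext (X : algebra sig) (th ph : X -> X -> Prop) :
  (forall x y, th x y <-> ph x y) -> ConK K th -> ConK K ph.
Proof. by move=> /rel_ext ->. Qed.

Lemma ConK_kernel (X Y : algebra sig) (h : X -> Y) :
  K Y -> is_hom h -> ConK K (kernel h).
Proof.
move=> KY hh.
have ker_cong : congruence (kernel h).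
  split=> //; first by move=> x y z; rewrite /kernel => ->.
  by move=> o a b ab; rewrite /kernel !hh; congr interp; apply: functional_extensionality.
split=> //; have [Q [f [hf sf kf]]] := congruence_quotient ker_cong.
exists Q, f; split=> //.
pose rep q := sval (constructive_indefinite_description _ (sf q)).
have repK q : f (rep q) = q by rewrite /rep; case: constructive_indefinite_description.
apply: (@K_embedding _ _ (h \o rep)) => // [o args | q1 q2 /= /kf]; last by rewrite !repK.
have /kf : f (rep (interp args)) = f (interp (fun i => rep (args i))).
  by rewrite repK hf; congr interp; apply: functional_extensionality => i; rewrite repK.
by rewrite /kernel /= => ->; rewrite hh.
Qed.

Lemma ConK_idrel (X : algebra sig) : K X -> ConK K (@idrel X).
Proof. by move=> KX; exact: (@ConK_kernel _ _ id). Qed.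

Lemma ConK_family_product (X : algebra sig) (I : Type) (t : I -> X -> X -> Prop) :
  (forall i, ConK K (t i)) ->
  exists (D : I -> algebra sig) (m : X -> prod_alg D),
    [/\ forall i, K (D i), is_hom m & forall i x y, m x i = m y i <-> t i x y].
Proof.
move=> Ct.
have quot i : {C : algebra sig & {f : X -> C |
    [/\ K C, is_hom f & forall x y, f x = f y <-> t i x y]}}.
  have [C /constructive_indefinite_description [f [KC hf _ kf]]] :=
    constructive_indefinite_description _ (proj2 (Ct i)).
  by exists C, f.
exists (fun i => projT1 (quot i)), (fun x i => sval (projT2 (quot i)) x); split.
- by move=> i; case: (svalP (projT2 (quot i))).
- move=> o args; apply: functional_extensionality_dep => i /=.
  by case: (svalP (projT2 (quot i))) => _ ->.
- by move=> i; case: (svalP (projT2 (quot i))).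
Qed.

Lemma ConK_bigmeet (X : algebra sig) (I : Type) (t : I -> X -> X -> Prop) :
  (forall i, ConK K (t i)) -> ConK K (fun x y => forall i, t i x y).
Proof.
move=> /ConK_family_product [D [m [KD hm mE]]].
apply: ConK_ext (ConK_kernel (K_prod KD) hm) => x y; split=> [mxy i | txy].
  by apply/mE; rewrite mxy.
by apply: functional_extensionality_dep => i; apply/mE.
Qed.

Lemma ConK_meet (X : algebra sig) (th ph : X -> X -> Prop) :
  ConK K th -> ConK K ph -> ConK K (fun x y => th x y /\ ph x y).
Proof.
move=> Cth Cph.
apply: ConK_ext (@ConK_bigmeet _ _ (fun b : bool => if b then th else ph) _); last by case.
move=> x y; split=> [tbxy | [thxy phxy] []] //.
by split; [exact: (tbxy true) | exact: (tbxy false)].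
Qed.

Lemma ConK_ultralimit (X : algebra sig) (I : Type) (t : I -> X -> X -> Prop)
    (U : (I -> Prop) -> Prop) :
  ultrafilter U -> (forall i, ConK K (t i)) -> ConK K (fun x y => U (fun i => t i x y)).
Proof.
move=> UU /ConK_family_product [D [m [KD hm mE]]].
have [UT _ US UI _] := UU.
pose E (p q : prod_alg D) := U (fun i => p i = q i).
have E_cong : congruence E.
  split=> [p | p q | p q r Epq Eqr | o a b Eab]; first by apply: (US _ _ UT).
  - by move=> pq; apply: (US _ _ pq) => i.
  - by apply: (US _ _ (UI _ _ Epq Eqr)) => i [-> ->].
  apply: (US _ _ (ultrafilter_bigI UU Eab)) => i abi /=.
  by congr interp; apply: functional_extensionality.
have [Z [g [hg sg kg]]] := congruence_quotient E_cong.
have KZ : K Z by case: QV => _ _ KPu; apply: (KPu _ _ U _ g).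
apply: ConK_ext (ConK_kernel KZ (is_hom_comp hm hg)) => x y.
rewrite /kernel /=; split=> [/kg Exy | Uxy]; last apply/kg.
  by apply: (US _ _ Exy) => i /mE.
by apply: (US _ _ Uxy) => i /mE.
Qed.

Lemma ConK_chain_union (X : algebra sig) (Ch : (X -> X -> Prop) -> Prop) :
  (exists t, Ch t) -> (forall t, Ch t -> ConK K t) ->
  (forall s t, Ch s -> Ch t ->
     (forall x y, s x y -> t x y) \/ (forall x y, t x y -> s x y)) ->
  ConK K (fun x y => exists2 t, Ch t & t x y).
Proof.
move=> [t0 Ch0] ChK Chtot.
pose I := {t | Ch t}.
pose above (i : I) (S : I -> Prop) :=
  forall j : I, (forall x y, sval i x y -> sval j x y) -> S j.
(* An ultrafilter on the chain containing all its final segments. *)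
have [U UU Uabove] : exists2 U, ultrafilter U & forall i S, above i S -> U S.
  have [||||U UU FU] := @ultrafilter_extension I (fun S => exists i, above i S).
  - by exists (exist _ t0 Ch0).
  - by case=> i /(_ i); apply.
  - by move=> S T [i Si] ST; exists i => j /Si /ST.
  - move=> S T [i Si] [j Tj].
    case: (Chtot _ _ (svalP i) (svalP j)) => ij; [exists j | exists i] => k jk.
      by split; [apply: Si => x y /ij /jk | exact: Tj].
    by split; [exact: Si | apply: Tj => x y /ij /jk].
  by exists U => // i S iS; apply: FU; exists i.
apply: ConK_ext (@ConK_ultralimit _ _ (fun i : I => sval i) _ UU (fun i => ChK _ (svalP i))).
move=> x y; split=> [Uxy | [t Cht txy]]; last by apply: (Uabove (exist _ t Cht)) => j; apply.
apply: NNPP => nxy; case: UU => _ UF US _ _; apply: UF; apply: (US _ _ Uxy) => i ixy.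
by apply: nxy; exists (sval i); first exact: svalP.
Qed.

Definition maximal_separating (C : algebra sig) (p q : C) (ps : C -> C -> Prop) :=
  [/\ ConK K ps, ~ ps p q &
      forall ph, ConK K ph -> ~ ph p q -> (forall x y, ps x y -> ph x y) -> ph = ps].

Lemma exists_maximal_separating (C : algebra sig) (p q : C) :
  K C -> p <> q -> exists ps, maximal_separating p q ps.
Proof.
move=> KC pq.
pose T := {ps : C -> C -> Prop | ConK K ps /\ ~ ps p q}.
pose R (s t : T) := boolp.asbool (forall x y, sval s x y -> sval t x y).
have [t tmax] : exists t, forall s, R t s -> s = t.
  apply: classical_sets.Zorn => [s | r s t /boolp.asboolP rs /boolp.asboolP st
                                 | s t /boolp.asboolP st /boolp.asboolP ts | Ch Chtot].
  - exact/boolp.asboolP.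
  - by apply/boolp.asboolP => x y /rs /st.
  - apply: eq_sig_hprop => [? ? ?|]; first exact: proof_irrelevance.
    by apply: rel_ext => x y; split; [exact: st | exact: ts].
  have [[s0 Chs0]|noCh] := classic (exists s, Ch s); last first.
    by exists (exist _ (@idrel C) (conj (ConK_idrel KC) pq)) => s Chs; case: noCh; exists s.
  pose ChT (r : C -> C -> Prop) := exists2 s, Ch s & sval s = r.
  have Cu : ConK K (fun x y => exists2 r, ChT r & r x y).
    apply: ConK_chain_union => [|r [s _ <-]|r1 r2 [s1 Ch1 <-] [s2 Ch2 <-]].
    - by exists (sval s0), s0.
    - by case: (svalP s).
    by case: (Chtot _ _ Ch1 Ch2) => /boolp.asboolP; [left | right].
  have nu : ~ exists2 r, ChT r & r p q by case=> r [s _ <-]; case: (svalP s).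
  exists (exist (fun ps => ConK K ps /\ ~ ps p q) _ (conj Cu nu)) => s Chs.
  by apply/boolp.asboolP => x y sxy; exists (sval s) => //; exists s.
exists (sval t); split; [by case: (svalP t) | by case: (svalP t) |].
move=> ph Cph phpq tph.
by rewrite -(tmax (exist _ ph (conj Cph phpq))) //; apply/boolp.asboolP.
Qed.

(* If no factor of a subdirect decomposition of Q were an isomorphism, every
   factor kernel would identify p and q, by maximality of ps. *)
Lemma maximal_separating_RSI (C : algebra sig) (p q : C) (ps : C -> C -> Prop)
    (Q : algebra sig) (f : C -> Q) :
  maximal_separating p q ps -> K Q -> is_hom f -> surj f ->
  (forall x y, f x = f y <-> ps x y) -> RSI K Q.
Proof.
move=> [_ nps psmax] KQ hf sf kf; split=> //; first by exists (f p), (f q) => /kf.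
move=> I D m KD hm minj _; apply: NNPP => noinj.
have mpq i : m (f p) i = m (f q) i.
  apply: NNPP => mi; apply: noinj; exists i => a b.
  have Ci : ConK K (kernel (fun x => m (f x) i)).
    by apply: ConK_kernel (KD i) _ => o args; rewrite hf hm.
  have /psmax -/(_ Ci mi) kerE : forall x y, ps x y -> kernel (fun x => m (f x) i) x y.
    by move=> x y /kf; rewrite /kernel => ->.
  have [[x <-] [y <-]] := (sf a, sf b).
  by move=> /= mxy; apply/kf; rewrite -kerE.
by apply: nps; apply/kf/minj; apply: functional_extensionality_dep.
Qed.

End RelativeCongruences.

Section FullExtensions.
Variables (sig : signature) (K : algebra sig -> Prop) (B : algebra sig) (A : B -> Prop).
Hypothesis Afull : full K A.

Lemma full_rep (th : B -> B -> Prop) :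
  ConK K th -> th <> @idrel B -> forall b, exists a, A a /\ th a b.
Proof. by case: Afull => _ _ sep Cth /rel_distinctP; exact: sep. Qed.

(* Every ps-class meets A, so t-related elements have ps-related representatives in A. *)
Lemma full_restr_eq_sub (ps t : B -> B -> Prop) :
  ConK K ps -> ps <> @idrel B -> congruence t -> (forall x y, ps x y -> t x y) ->
  restr_eq A ps t -> t = ps.
Proof.
move=> Cps psid [_ tS tT _] pst rA; have [[_ psS psT _] _] := Cps.
apply: rel_ext => u v; split=> [tuv | /pst //].
have [[a [Aa au]] [a' [Aa' a'v]]] := (full_rep Cps psid u, full_rep Cps psid v).
have /rA -/(_ Aa Aa') aa' : t a a'.
  by apply: tT (pst _ _ au) (tT _ _ _ tuv (tS _ _ (pst _ _ a'v))).
exact: psT (psS _ _ au) (psT _ _ _ aa' a'v).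
Qed.

Lemma full_restr_eq_idrel : quasivariety K ->
  (exists th ph : B -> B -> Prop,
      [/\ ConK K th, ConK K ph, rel_distinct th ph & restr_eq A th ph]) ->
  exists ph : B -> B -> Prop,
      [/\ ConK K ph, rel_distinct (@idrel B) ph & restr_eq A (@idrel B) ph].
Proof.
move=> QV [th [ph [Cth Cph /rel_distinctP thph rA]]].
pose ps x y := th x y /\ ph x y.
have Cps : ConK K ps := ConK_meet QV Cth Cph.
have [t [Ct pst tps restr_t]] : exists t,
    [/\ ConK K t, forall x y, ps x y -> t x y, t <> ps & restr_eq A ps t].
  have [thps|thps] := classic (th = ps); [exists ph | exists th]; split=> //.
  - by move=> x y [].
  - by rewrite -thps; exact: nesym.
  - by move=> a a' Aa Aa'; split=> [[]|phaa']; last by split=> //; apply/rA.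
  - by move=> x y [].
  by move=> a a' Aa Aa'; split=> [[]|thaa']; last by split=> //; apply/rA.
have psid : ps = @idrel B.
  by apply: NNPP => psid; apply: tps; apply: full_restr_eq_sub => //; case: Ct.
exists t; split=> //; rewrite -psid //; exact/rel_distinctP/nesym.
Qed.

(* The restriction of ph to A is the identity and every ph-class meets A, so
   picking the representative in A is a retraction of B onto A. *)
Lemma epic_restr_idrel (ph : B -> B -> Prop) :
  K B -> subuniverse A -> epic K A -> ConK K ph -> restr_eq A (@idrel B) ph ->
  ph = @idrel B.
Proof.
move=> KB sA epi Cph rA; have [-> //|phid] := classic (ph = @idrel B).
have [[phR phS phT phC] _] := Cph.
pose r b := sval (constructive_indefinite_description _ (full_rep Cph phid b)).
have [Ar phr] : (forall b, A (r b)) /\ (forall b, ph (r b) b).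
  by split=> b; rewrite /r; case: constructive_indefinite_description => ? [].
have rK a : A a -> r a = a by move=> Aa; apply/rA => //; exact: phr.
have hr : is_hom r.
  move=> o args; apply/rA; [exact: Ar | by apply: sA => k; exact: Ar |].
  exact: phT (phr _) (phS _ _ (phC _ _ _ (fun k => phr (args k)))).
have rid b : b = r b.
  by apply: (epi B id r) => // a Aa; rewrite rK.
apply: rel_ext => u v; split=> [phuv | <-]; last exact: phR.
rewrite (rid u) (rid v); apply/rA => //.
exact: phT (phr u) (phT _ _ _ phuv (phS _ _ (phr v))).
Qed.

Lemma not_epic_cases : quasivariety K -> ~ epic K A ->
  (exists th ph : B -> B -> Prop,
      [/\ ConK K th, ConK K ph, rel_distinct th ph & restr_eq A th ph]) \/
  (exists (C : algebra sig) (g h : B -> C),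
      [/\ RSI K C, is_hom g /\ injective g, is_hom h /\ injective h,
          (exists x, g x <> h x) & (forall a, A a -> g a = h a)]).
Proof.
move=> QV nepi.
have [C [g [h [KC hg hh gAh [x gxhx]]]]] : exists (C : algebra sig) (g h : B -> C),
    [/\ K C, is_hom g, is_hom h, forall a, A a -> g a = h a & exists x, g x <> h x].
  apply: NNPP => nsep; apply: nepi => C g h KC hg hh gAh x.
  by apply: NNPP => gxhx; apply: nsep; exists C, g, h; split=> //; exists x.
have [ps maxps] := exists_maximal_separating QV KC gxhx.
have [[_ [Q [q [KQ hq sq kq]]]] nps _] := maxps.
have [hqg hqh] := (is_hom_comp hg hq, is_hom_comp hh hq).
have [kerE|kerN] := classic (kernel (q \o g) = kernel (q \o h)); last first.
  left; exists (kernel (q \o g)), (kernel (q \o h)); split.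
  - exact: (ConK_kernel QV KQ hqg).
  - exact: (ConK_kernel QV KQ hqh).
  - exact/rel_distinctP.
  - by move=> a a' Aa Aa'; rewrite /kernel /= !gAh.
(* A common nontrivial kernel would identify x with some a in A, where g and h agree. *)
have kerg : kernel (q \o g) = @idrel B.
  apply: NNPP => /(full_rep (ConK_kernel QV KQ hqg))/(_ x) [a [Aa qga]].
  apply: nps; apply/kq.
  have qha : kernel (q \o h) a x by rewrite -kerE.
  by move: qga qha; rewrite /kernel /= gAh // => <- <-.
have injg : injective (q \o g) by move=> u v guv; rewrite -[u = v]/(idrel u v) -kerg.
right; exists Q, (q \o g), (q \o h); split.
- exact: maximal_separating_RSI maxps KQ hq sq kq.
- by [].
- by split=> // u v huv; apply: injg; move: huv; rewrite -[_ = _]/(kernel _ u v) -kerE.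
- by exists x => /kq.
- by move=> a Aa /=; rewrite gAh.
Qed.

End FullExtensions.

Theorem mainTheorem6 (sig : signature) (K : algebra sig -> Prop)
    (B : algebra sig) (A : B -> Prop) :
  quasivariety K -> K B -> subuniverse A -> full K A ->
  ((~ epic K A) <->
     ((exists th ph : B -> B -> Prop,
         [/\ ConK K th, ConK K ph, rel_distinct th ph & restr_eq A th ph]) \/
      (exists (C : algebra sig) (g h : B -> C),
         [/\ RSI K C, is_hom g /\ injective g, is_hom h /\ injective h,
             (exists x, g x <> h x) & (forall a, A a -> g a = h a)]))) /\
  ((exists th ph : B -> B -> Prop,
      [/\ ConK K th, ConK K ph, rel_distinct th ph & restr_eq A th ph]) ->
   exists ph : B -> B -> Prop,
      [/\ ConK K ph, rel_distinct (@idrel B) ph & restr_eq A (@idrel B) ph]).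
Proof.
move=> QV KB sA Afull.
have moreover := full_restr_eq_idrel Afull QV.
split=> //; split; first exact: not_epic_cases.
case=> [/moreover [ph [Cph /rel_distinctP idph rA]] |
        [C [g [h [[KC _ _] [hg _] [hh _] [x gxhx] gAh]]]]] epi.
- by apply: idph; rewrite (epic_restr_idrel Afull KB sA epi Cph rA).
- exact: gxhx (epi C g h KC hg hh gAh x).
Qed.
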